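(* Let $N\ge2$ be an integer. For all $\sigma>0$ and all $x\in[1/N,1]$, \[\Bigl|\sum_{n=0}^\infty e^{-n/\sigma}\hat F^n\varphi_0(x)-S(\sigma)\Bigr|\le\frac{N(N-1)}{2},\qquad\text{where } S(\sigma):=\frac{1}{\log N}\sum_{n=0}^\infty e^{-n/\sigma}\lambda\bigl(F^{-n}[1/N,1]\bigr).\]
   Context: $\lambda$ is Lebesgue measure; $F$ is the Farey map, $F(x)=x/(1-x)$ for $0\le x\le1/2$, $F(x)=(1-x)/x$ for $1/2<x\le1$. $\hat F$ is the transfer operator of $F$ with respect to $d\mu=dx/x$, given by $\hat Ff(x)=\dfrac{f(x/(1+x))+x\,f(1/(1+x))}{1+x}$. $\varphi_0(x):=x$. *)

From Stdlib Require Import Reals Lra ClassicalEpsilon.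
Open Scope R_scope.

Definition F (x : R) : R :=
  if Rle_dec x (1/2) then x / (1 - x) else (1 - x) / x.

(* Transfer operator of F w.r.t. dx/x. *)
Definition Fhat (f : R -> R) (x : R) : R :=
  (f (x / (1 + x)) + x * f (1 / (1 + x))) / (1 + x).

Definition phi0 (x : R) : R := x.

Fixpoint Fhat_iter (n : nat) (f : R -> R) : R -> R :=
  match n with
  | O => f
  | S k => Fhat (Fhat_iter k f)
  end.

Fixpoint F_iter (n : nat) (x : R) : R :=
  match n with
  | O => x
  | S k => F (F_iter k x)
  end.

Definition preimage_iter (n : nat) (a b : R) (x : R) : Prop :=
  0 <= x <= 1 /\ a <= F_iter n x <= b.

Definition cover_sum (A : R -> Prop) (s : R) : Prop :=
  exists a b : nat -> R,
    (forall k, a k <= b k) /\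
    (forall x, A x -> exists k, a k < x < b k) /\
    infinite_sum (fun k => b k - a k) s.

Definition is_glb (E : R -> Prop) (m : R) : Prop :=
  (forall s, E s -> m <= s) /\ (forall m', (forall s, E s -> m' <= s) -> m' <= m).

Definition lebesgue (A : R -> Prop) : R :=
  epsilon (inhabits 0) (fun m => is_glb (cover_sum A) m).

From Stdlib Require Import Reals Lra Lia List Wf_nat ClassicalEpsilon Classical.
From Coquelicot Require Import Coquelicot.
Open Scope R_scope.

(* Let phi_n = Fhat^n phi0, rho = exp (-1/sigma) and Phi x = sum_n rho^n phi_n x.
   Fhat preserves [0,1]-valued functions and nondecreasing concave ones, so each phi_n is
   nondecreasing on (0,1] with values in [0,1], and so is Phi.  If Q_n is a primitive
   of phi_n(t)/t, the two inverse branches of F give lambda (F^-n [a,b]) = Q_n b - Q_n a,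
   and monotonicity of phi_n squeezes lambda (F^-n [1/N,1]) / log N between phi_n (1/N)
   and phi_n 1; hence S / log N lies in [Phi (1/N), Phi 1], as does Phi x.  Finally the
   fixed-point equation Phi = phi0 + rho Fhat Phi gives
   Phi (1/r) - Phi (1/(r+1)) <= 1/r + (Phi 1 - Phi (1/(r+1))) / (r+1),
   and induction on N yields Phi 1 - Phi (1/N) <= N(N-1)/2. *)

Ltac simpl_ops :=
  unfold minus, plus, scal, mult, opp, one, zero; simpl;
  unfold minus, mult, plus, opp, one, zero; simpl.

Lemma nondecreasing_of_derive (f f' : R -> R) a b : a <= b ->
  (forall x, a <= x <= b -> is_derive f x (f' x)) ->
  (forall x, a <= x <= b -> 0 <= f' x) -> f a <= f b.
Proof.
  intros Hab Hd Hp.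
  destruct (MVT_gen f a b f') as [c [Hc Heq]];
    rewrite ?Rmin_left, ?Rmax_right in * by lra.
  - intros x Hx; apply Hd; lra.
  - intros x Hx. apply continuity_pt_filterlim.
    apply (ex_derive_continuous (K:=R_AbsRing) (V:=R_NormedModule)).
    eexists; apply Hd; lra.
  - assert (0 <= f' c) by (apply Hp; lra). nra.
Qed.

Lemma inv_1px_range x : 0 <= x -> 0 < 1 / (1 + x) <= 1.
Proof.
  intros Hx. split; [apply Rdiv_lt_0_compat; lra|].
  apply (Rdiv_le_1 _ (1 + x)); lra.
Qed.

Lemma x_div_1px_range x : 0 <= x -> 0 <= x / (1 + x) < 1.
Proof.
  intros Hx. split; [apply Rdiv_le_0_compat; lra|].
  apply Rmult_lt_reg_r with (1 + x); [lra|].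
  unfold Rdiv; rewrite Rmult_assoc, Rinv_l; lra.
Qed.

Lemma Fhat_unit_interval f x : (forall y, 0 <= y <= 1 -> 0 <= f y <= 1) ->
  0 <= x <= 1 -> 0 <= Fhat f x <= 1.
Proof.
  intros Hf Hx. unfold Fhat.
  destruct (x_div_1px_range x) as [H0 H0']; [lra|].
  destruct (inv_1px_range x) as [H1 H1']; [lra|].
  destruct (Hf (x / (1 + x))) as [a1 a2]; [lra|].
  destruct (Hf (1 / (1 + x))) as [b1 b2]; [lra|].
  assert (0 <= x * f (1 / (1 + x)) <= x) by nra.
  split; [apply Rdiv_le_0_compat; lra|apply (Rdiv_le_1 _ (1 + x)); lra].
Qed.

(* With s = 1/(1+x) one has x/(1+x) = 1 - s, so Fhat f is a reparametrisation of
   the symmetric combination below; its derivatives are computed in s. *)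
Definition sym_comb (f : R -> R) (s : R) : R := s * f (1 - s) + (1 - s) * f s.

Definition sym_comb_d1 (f f1 : R -> R) (s : R) : R :=
  f (1 - s) - s * f1 (1 - s) - f s + (1 - s) * f1 s.

Definition sym_comb_d2 (f1 f2 : R -> R) (s : R) : R :=
  -2 * f1 (1 - s) + s * f2 (1 - s) - 2 * f1 s + (1 - s) * f2 s.

Lemma Fhat_sym_comb f x : x <> -1 -> Fhat f x = sym_comb f (1 / (1 + x)).
Proof.
  intros Hx. unfold Fhat, sym_comb.
  replace (1 - 1 / (1 + x)) with (x / (1 + x)) by (field; lra).
  field. lra.
Qed.

Lemma is_derive_reflect (g g' : R -> R) s : is_derive g (1 - s) (g' (1 - s)) ->
  is_derive (fun t => g (1 - t)) s (- g' (1 - s)).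
Proof.
  intros H. evar (l : R). replace (- g' (1 - s)) with l.
  - apply (is_derive_comp g (fun t => 1 - t)); [exact H|].
    apply @is_derive_minus; [apply @is_derive_const|apply @is_derive_id].
  - unfold l; simpl_ops; ring.
Qed.

Lemma is_derive_sym_comb f f1 s :
  is_derive f (1 - s) (f1 (1 - s)) -> is_derive f s (f1 s) ->
  is_derive (sym_comb f) s (sym_comb_d1 f f1 s).
Proof.
  intros H1 H2. unfold sym_comb.
  evar (l : R). replace (sym_comb_d1 f f1 s) with l.
  - apply @is_derive_plus; apply @is_derive_mult;
      try (intros; apply Rmult_comm).
    + apply @is_derive_id.
    + apply is_derive_reflect; exact H1.
    + apply @is_derive_minus; [apply @is_derive_const|apply @is_derive_id].
    + exact H2.
  - unfold l, sym_comb_d1. simpl_ops; ring.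
Qed.

Lemma is_derive_sym_comb_d1 f f1 f2 s :
  is_derive f (1 - s) (f1 (1 - s)) -> is_derive f s (f1 s) ->
  is_derive f1 (1 - s) (f2 (1 - s)) -> is_derive f1 s (f2 s) ->
  is_derive (sym_comb_d1 f f1) s (sym_comb_d2 f1 f2 s).
Proof.
  intros H1 H2 H3 H4. unfold sym_comb_d1.
  evar (l : R). replace (sym_comb_d2 f1 f2 s) with l.
  - apply @is_derive_plus; [apply @is_derive_minus; [apply @is_derive_minus|]|].
    + apply is_derive_reflect; exact H1.
    + apply @is_derive_mult; [apply @is_derive_id|apply is_derive_reflect; exact H3|].
      intros; apply Rmult_comm.
    + exact H2.
    + apply @is_derive_mult; [| exact H4 | intros; apply Rmult_comm].
      apply @is_derive_minus; [apply @is_derive_const|apply @is_derive_id].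
  - unfold l, sym_comb_d2. simpl_ops; ring.
Qed.

Lemma is_derive_comp_inv1px (g : R -> R) g' x : -1 < x ->
  is_derive g (1 / (1 + x)) g' ->
  is_derive (fun t => g (1 / (1 + t))) x (- (1 / (1 + x)) ^ 2 * g').
Proof.
  intros Hx Hg. apply (is_derive_comp g (fun t => 1 / (1 + t))); [exact Hg|].
  auto_derive; [lra|field; lra].
Qed.

(* Derivatives are required on the open set (0,2) so that they exist at the endpoint 1. *)
Definition nondecr_concave (f : R -> R) : Prop := exists f1 f2 : R -> R,
  (forall x, 0 < x < 2 -> is_derive f x (f1 x) /\ is_derive f1 x (f2 x)) /\
  (forall x, 0 < x <= 1 -> 0 <= f1 x /\ f2 x <= 0).

Lemma nondecr_concave_mono f x y : nondecr_concave f ->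
  0 < x -> x <= y -> y <= 1 -> f x <= f y.
Proof.
  intros [f1 [f2 [Hd Hs]]] Hx Hxy Hy.
  apply (nondecreasing_of_derive f f1 x y Hxy).
  - intros z Hz; apply Hd; lra.
  - intros z Hz; apply Hs; lra.
Qed.

Lemma sym_comb_d1_nonpos f f1 s : 1 / 2 <= s <= 1 ->
  f (1 - s) <= f s -> f1 s <= f1 (1 - s) -> 0 <= f1 (1 - s) ->
  sym_comb_d1 f f1 s <= 0.
Proof.
  intros Hs Hf Hf1 Hf1'. unfold sym_comb_d1.
  assert ((1 - s) * f1 s <= (1 - s) * f1 (1 - s)) by (apply Rmult_le_compat_l; lra).
  assert ((1 - s) * f1 (1 - s) <= s * f1 (1 - s)) by (apply Rmult_le_compat_r; lra).
  lra.
Qed.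

Lemma sym_comb_d2_nonpos f f1 f2 s : 1 / 2 <= s <= 1 ->
  f (1 - s) <= f s -> 0 <= f1 (1 - s) -> 0 <= f1 s -> f2 (1 - s) <= 0 -> f2 s <= 0 ->
  2 * s ^ 3 * sym_comb_d1 f f1 s + s ^ 4 * sym_comb_d2 f1 f2 s <= 0.
Proof.
  intros Hs Hf Ha1 Hb1 Ha2 Hb2.
  replace (2 * s ^ 3 * sym_comb_d1 f f1 s + s ^ 4 * sym_comb_d2 f1 f2 s) with
    (s ^ 3 * (2 * (f (1 - s) - f s) - 4 * s * f1 (1 - s) - (4 * s - 2) * f1 s
              + s ^ 2 * f2 (1 - s) + s * (1 - s) * f2 s))
    by (unfold sym_comb_d1, sym_comb_d2; ring).
  assert (0 < s ^ 3) by (apply pow_lt; lra).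
  assert (0 <= s * f1 (1 - s)) by (apply Rmult_le_pos; lra).
  assert (0 <= (4 * s - 2) * f1 s) by (apply Rmult_le_pos; lra).
  assert (s ^ 2 * f2 (1 - s) <= 0) by (apply Rmult_le_0_l; [apply pow2_ge_0|lra]).
  assert (s * (1 - s) * f2 s <= 0) by (apply Rmult_le_0_l; [nra|lra]).
  nra.
Qed.

Lemma inv_1px_gt_third x : 0 < x < 2 -> 1 / 3 < 1 / (1 + x) < 1.
Proof.
  intros Hx. assert (E : 1 / (1 + x) * (1 + x) = 1) by (field; lra).
  assert (0 < 1 / (1 + x)) by (apply Rdiv_lt_0_compat; lra). nra.
Qed.

Section FhatDerivatives.
Variables f f1 f2 : R -> R.
Hypothesis f_derive :
  forall x, 0 < x < 2 -> is_derive f x (f1 x) /\ is_derive f1 x (f2 x).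

Definition Fhat_d1 (x : R) : R := - (1 / (1 + x)) ^ 2 * sym_comb_d1 f f1 (1 / (1 + x)).

Definition Fhat_d2 (x : R) : R :=
  2 * (1 / (1 + x)) ^ 3 * sym_comb_d1 f f1 (1 / (1 + x))
  + (1 / (1 + x)) ^ 4 * sym_comb_d2 f1 f2 (1 / (1 + x)).

Lemma is_derive_Fhat x : 0 < x < 2 -> is_derive (Fhat f) x (Fhat_d1 x).
Proof.
  intros Hx. pose proof (inv_1px_gt_third x Hx) as Hs.
  apply is_derive_ext_loc with (fun t => sym_comb f (1 / (1 + t))).
  - exists (mkposreal (1 + x) ltac:(lra)). intros t Ht.
    apply Rabs_def2 in Ht. symmetry. apply Fhat_sym_comb. simpl in Ht.
    unfold minus, plus, opp in Ht; simpl in Ht. lra.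
  - apply is_derive_comp_inv1px; [lra|].
    apply is_derive_sym_comb; apply f_derive; lra.
Qed.

Lemma is_derive_Fhat_d1 x : 0 < x < 2 -> is_derive Fhat_d1 x (Fhat_d2 x).
Proof.
  intros Hx. pose proof (inv_1px_gt_third x Hx) as Hs.
  destruct (f_derive (1 / (1 + x))) as [D1 D2]; [lra|].
  destruct (f_derive (1 - 1 / (1 + x))) as [D1' D2']; [lra|].
  evar (l : R).
  replace (Fhat_d2 x) with (- (1 / (1 + x)) ^ 2 * l).
  - apply (is_derive_comp_inv1px (fun s => - s ^ 2 * sym_comb_d1 f f1 s)); [lra|].
    apply @is_derive_mult; [| |intros; apply Rmult_comm].
    + auto_derive; [auto|reflexivity].
    + apply (is_derive_sym_comb_d1 f f1 f2); assumption.
  - unfold l, Fhat_d2; simpl_ops; ring.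
Qed.

End FhatDerivatives.

Lemma nondecr_concave_Fhat f : nondecr_concave f -> nondecr_concave (Fhat f).
Proof.
  intros Hf. pose proof Hf as [f1 [f2 [Hd Hs]]].
  exists (Fhat_d1 f f1), (Fhat_d2 f f1 f2). split.
  - intros x Hx. split; [apply (is_derive_Fhat f f1 f2)|apply is_derive_Fhat_d1]; auto.
  - intros x Hx.
    set (s := 1 / (1 + x)).
    assert (Hs1 : 1 / 2 <= s < 1).
    { assert (E : s * (1 + x) = 1) by (unfold s; field; lra).
      assert (0 < s) by (apply Rdiv_lt_0_compat; lra). nra. }
    destruct (Hs s) as [Hb1 Hb2]; [lra|].
    destruct (Hs (1 - s)) as [Ha1 Ha2]; [lra|].
    assert (Hmono : f (1 - s) <= f s) by (apply (nondecr_concave_mono f); auto; lra).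
    assert (Hconc : f1 s <= f1 (1 - s)).
    { assert (- f1 (1 - s) <= - f1 s); [|lra].
      apply (nondecreasing_of_derive (fun y => - f1 y) (fun y => - f2 y)); [lra| |].
      - intros y Hy. apply @is_derive_opp. apply Hd; lra.
      - intros y Hy. destruct (Hs y); lra. }
    unfold Fhat_d1, Fhat_d2. fold s. split.
    + pose proof (sym_comb_d1_nonpos f f1 s ltac:(lra) Hmono Hconc Ha1).
      assert (0 <= s ^ 2) by apply pow2_ge_0. nra.
    + apply (sym_comb_d2_nonpos f f1 f2 s); lra.
Qed.

Definition phi (n : nat) : R -> R := Fhat_iter n phi0.

Lemma phi_S n x : phi (S n) x = (phi n (x / (1 + x)) + x * phi n (1 / (1 + x))) / (1 + x).
Proof. reflexivity. Qed.

Lemma phi_unit_interval n x : 0 <= x <= 1 -> 0 <= phi n x <= 1.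
Proof.
  revert x; induction n as [|n IH]; intros x Hx.
  - exact Hx.
  - apply Fhat_unit_interval; assumption.
Qed.

Lemma nondecr_concave_phi n : nondecr_concave (phi n).
Proof.
  induction n as [|n IH].
  - exists (fun _ => 1), (fun _ => 0). split.
    + intros x _. split; [apply @is_derive_id|apply @is_derive_const].
    + intros; lra.
  - apply nondecr_concave_Fhat. exact IH.
Qed.

Lemma phi_mono n x y : 0 < x -> x <= y -> y <= 1 -> phi n x <= phi n y.
Proof. apply nondecr_concave_mono, nondecr_concave_phi. Qed.

Lemma Series_nonneg a : ex_series a -> (forall n, 0 <= a n) -> 0 <= Series a.
Proof.
  intros Ha Hp.
  pose proof (sum_incr a 0 _ (proj1 (is_series_Reals _ _) (Series_correct a Ha)) Hp).
  specialize (Hp 0%nat). simpl in *. lra.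
Qed.

Lemma quadratic_bound_step r d d' : 2 <= r -> d <= r * (r - 1) / 2 ->
  d' <= d + / r + d' / (r + 1) -> d' <= (r + 1) * r / 2.
Proof.
  intros Hr Hd Hd'.
  assert (Hmul : d' * r <= (d + / r) * (r + 1)).
  { apply Rmult_le_compat_r with (r := r + 1) in Hd'; [|lra].
    replace ((d + / r + d' / (r + 1)) * (r + 1)) with ((d + / r) * (r + 1) + d')
      in Hd' by (field; lra).
    lra. }
  assert (Ht : / r <= / 2) by (apply Rinv_le_contravar; lra).
  assert ((d + / r) * (r + 1) <= r * r / 2 * (r + 1))
    by (apply Rmult_le_compat_r; nra).
  apply Rmult_le_reg_r with r; nra.
Qed.

Section GeneratingFunction.
Variable rho : R.
Hypothesis rho_range : 0 < rho < 1.

Definition Phi (x : R) : R := Series (fun n => rho ^ n * phi n x).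

Lemma pow_rho_pos n : 0 < rho ^ n.
Proof. apply pow_lt; lra. Qed.

Lemma ex_series_Phi x : 0 <= x <= 1 -> ex_series (fun n => rho ^ n * phi n x).
Proof.
  intros Hx.
  apply (ex_series_le (K:=R_AbsRing) (V:=R_CompleteNormedModule)) with (fun n => rho ^ n).
  - intros n. change (Rabs (rho ^ n * phi n x) <= rho ^ n).
    destruct (phi_unit_interval n x Hx). pose proof (pow_rho_pos n).
    rewrite Rabs_right by nra. nra.
  - apply ex_series_geom. rewrite Rabs_right; lra.
Qed.

Lemma Phi_ge0 x : 0 <= x <= 1 -> 0 <= Phi x.
Proof.
  intros Hx. apply Series_nonneg; [apply ex_series_Phi; exact Hx|].
  intros n. destruct (phi_unit_interval n x Hx). pose proof (pow_rho_pos n). nra.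
Qed.

Lemma Phi_mono x y : 0 < x -> x <= y -> y <= 1 -> Phi x <= Phi y.
Proof.
  intros Hx Hxy Hy. apply Series_le; [|apply ex_series_Phi; lra].
  intros n. destruct (phi_unit_interval n x) as [H0 _]; [lra|].
  pose proof (pow_rho_pos n). pose proof (phi_mono n x y Hx Hxy Hy). nra.
Qed.

Lemma Phi_fixed_point y : 0 <= y <= 1 ->
  Phi y = y + rho * (Phi (y / (1 + y)) + y * Phi (1 / (1 + y))) / (1 + y).
Proof.
  intros Hy.
  destruct (x_div_1px_range y) as [H0 H0']; [lra|].
  destruct (inv_1px_range y) as [H1 H1']; [lra|].
  unfold Phi. rewrite Series_incr_1 by (apply ex_series_Phi; exact Hy).
  rewrite (Series_ext _ (fun k => rho / (1 + y) * (rho ^ k * phi k (y / (1 + y)))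
                              + rho * y / (1 + y) * (rho ^ k * phi k (1 / (1 + y))))).
  2:{ intros k. rewrite phi_S. simpl. field. lra. }
  rewrite Series_plus
    by (apply (ex_series_scal_l (K:=R_AbsRing) (V:=R_NormedModule));
        apply ex_series_Phi; lra).
  rewrite !Series_scal_l.
  replace (rho ^ 0 * phi 0 y) with y by (unfold phi, phi0; simpl; ring).
  field. lra.
Qed.

Lemma Phi_increment_bound r : 1 <= r ->
  Phi (/ r) - Phi (/ (r + 1)) <= / r + (Phi (r / (r + 1)) - Phi (/ (r + 1))) / (r + 1).
Proof.
  intros Hr.
  assert (Hinv : forall t, 1 <= t -> 0 <= / t <= 1).
  { intros t Ht. split; [left; apply Rinv_0_lt_compat; lra|].
    rewrite <- Rinv_1. apply Rinv_le_contravar; lra. }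
  rewrite (Phi_fixed_point (/ r) (Hinv r Hr)).
  replace (/ r / (1 + / r)) with (/ (r + 1)) by (field; lra).
  replace (1 / (1 + / r)) with (r / (r + 1)) by (field; lra).
  pose proof (Phi_ge0 (/ (r + 1)) (Hinv (r + 1) ltac:(lra))) as HA.
  assert (HB : 0 <= Phi (r / (r + 1))).
  { apply Phi_ge0. replace (r / (r + 1)) with (1 - / (r + 1)) by (field; lra).
    pose proof (Hinv (r + 1) ltac:(lra)). pose proof (Rinv_0_lt_compat (r + 1)). lra. }
  set (A := Phi (/ (r + 1))) in *. set (B := Phi (r / (r + 1))) in *.
  (* [rho] multiplies a nonnegative quantity, so [rho < 1] lets us drop it *)
  replace (rho * (A + / r * B) / (1 + / r)) with (rho * (A + (B - A) / (r + 1)))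
    by (field; lra).
  assert (0 <= A + (B - A) / (r + 1)).
  { replace (A + (B - A) / (r + 1)) with ((A * r + B) / (r + 1)) by (field; lra).
    apply Rdiv_le_0_compat; nra. }
  nra.
Qed.

Lemma Phi_oscillation m : (2 <= m)%nat -> Phi 1 - Phi (/ INR m) <= INR m * (INR m - 1) / 2.
Proof.
  induction m as [|m IH]; intros Hm; [lia|].
  rewrite S_INR.
  assert (Hr : 1 <= INR m) by (apply (le_INR 1); lia).
  pose proof (Phi_increment_bound (INR m) Hr) as Hinc.
  destruct (Nat.eq_dec m 1) as [->|Hm1].
  - simpl INR in *. replace (1 / (1 + 1)) with (/ (1 + 1)) in Hinc by field.
    rewrite Rinv_1 in Hinc. lra.
  - assert (Hr2 : 2 <= INR m) by (apply (le_INR 2); lia).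
    assert (Htop : Phi (INR m / (INR m + 1)) <= Phi 1).
    { apply Phi_mono; try lra; [apply Rdiv_lt_0_compat; lra|].
      apply (Rdiv_le_1 _ (INR m + 1)); lra. }
    replace (INR m + 1 - 1) with (INR m) by ring.
    apply (quadratic_bound_step (INR m) (Phi 1 - Phi (/ INR m))); [lra|apply IH; lia|].
    assert ((Phi (INR m / (INR m + 1)) - Phi (/ (INR m + 1))) / (INR m + 1)
            <= (Phi 1 - Phi (/ (INR m + 1))) / (INR m + 1))
      by (apply Rmult_le_compat_r; [left; apply Rinv_0_lt_compat|]; lra).
    lra.
Qed.

End GeneratingFunction.

(* The recursion follows the inverse branches [t/(1+t)] and [1/(1+t)] of [F]. *)
Fixpoint Q (n : nat) (t : R) : R :=
  match n with
  | O => t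
  | S k => Q k (t / (1 + t)) - Q k (1 / (1 + t))
  end.

Lemma Q_derive n t : 0 < t < 2 -> is_derive (Q n) t (phi n t / t).
Proof.
  revert t; induction n as [|k IH]; intros t Ht.
  - simpl. replace (phi 0 t / t) with 1 by (unfold phi, phi0; simpl; field; lra).
    apply @is_derive_id.
  - assert (Hu : 0 < t / (1 + t) < 2).
    { destruct (x_div_1px_range t) as [_ H]; [lra|].
      split; [apply Rdiv_lt_0_compat|]; lra. }
    pose proof (inv_1px_gt_third t Ht) as Hv.
    assert (I1 : is_derive (fun t : R => t / (1 + t)) t (1 / (1 + t) ^ 2))
      by (auto_derive; [lra|field; lra]).
    assert (I2 : is_derive (fun t : R => 1 / (1 + t)) t (- (1 / (1 + t) ^ 2)))
      by (auto_derive; [lra|field; lra]).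
    pose proof (is_derive_comp (Q k) _ t _ _ (IH _ Hu) I1) as C1.
    pose proof (is_derive_comp (Q k) _ t _ _ (IH (1 / (1 + t)) ltac:(lra)) I2) as C2.
    evar (l : R). replace (phi (S k) t / t) with l.
    + exact (@is_derive_minus R_AbsRing R_NormedModule _ _ t _ _ C1 C2).
    + unfold l. simpl_ops. rewrite phi_S. field. lra.
Qed.

Lemma Q_total n : Q n 1 - Q n 0 = 1.
Proof.
  induction n as [|k IH]; simpl; [ring|].
  replace (0 / (1 + 0)) with 0 by field. replace (1 / (1 + 0)) with 1 by field.
  lra.
Qed.

(* Monotonicity of [phi n] squeezes [phi n t / t] between [phi n a / t] and [phi n 1 / t]. *)
Lemma Q_log_bounds n a : 0 < a <= 1 ->
  phi n a * (- ln a) <= Q n 1 - Q n a <= phi n 1 * (- ln a).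
Proof.
  intros Ha. replace (- ln a) with (ln 1 - ln a) by (rewrite ln_1; ring). split.
  - assert (Q n a - phi n a * ln a <= Q n 1 - phi n a * ln 1); [|lra].
    apply (nondecreasing_of_derive (fun t => Q n t - phi n a * ln t)
             (fun t => phi n t / t - phi n a * / t)); [lra| |].
    + intros x Hx. apply @is_derive_minus; [apply Q_derive; lra|].
      apply @is_derive_scal, is_derive_ln; lra.
    + intros x Hx. assert (phi n a <= phi n x) by (apply phi_mono; lra).
      unfold Rdiv. assert (0 < / x) by (apply Rinv_0_lt_compat; lra). nra.
  - assert (phi n 1 * ln a - Q n a <= phi n 1 * ln 1 - Q n 1); [|lra].
    apply (nondecreasing_of_derive (fun t => phi n 1 * ln t - Q n t)
             (fun t => phi n 1 * / t - phi n t / t)); [lra| |].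
    + intros x Hx. apply @is_derive_minus; [|apply Q_derive; lra].
      apply @is_derive_scal, is_derive_ln; lra.
    + intros x Hx. assert (phi n x <= phi n 1) by (apply phi_mono; lra).
      unfold Rdiv. assert (0 < / x) by (apply Rinv_0_lt_compat; lra). nra.
Qed.

Lemma Q_series_bounds rho a : 0 < rho < 1 -> 0 < a <= 1 ->
  ex_series (fun n => rho ^ n * (Q n 1 - Q n a)) /\
  Phi rho a * (- ln a) <= Series (fun n => rho ^ n * (Q n 1 - Q n a))
                       <= Phi rho 1 * (- ln a).
Proof.
  intros Hrho Ha.
  assert (Hln : 0 <= - ln a).
  { assert (ln a <= ln 1) by (apply ln_le; lra). rewrite ln_1 in *. lra. }
  assert (Hterm : forall n, 0 <= rho ^ n * phi n a * (- ln a) /\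
                            rho ^ n * phi n a * (- ln a) <= rho ^ n * (Q n 1 - Q n a) /\
                            rho ^ n * (Q n 1 - Q n a) <= rho ^ n * phi n 1 * (- ln a)).
  { intros n. destruct (Q_log_bounds n a Ha) as [B1 B2].
    pose proof (pow_rho_pos rho Hrho n).
    destruct (phi_unit_interval n a) as [Hp _]; [lra|].
    repeat split; [apply Rmult_le_pos; [nra|lra]| |]; rewrite Rmult_assoc;
      apply Rmult_le_compat_l; lra. }
  assert (Hex1 : ex_series (fun n => rho ^ n * phi n 1 * (- ln a)))
    by (apply ex_series_scal_r, ex_series_Phi; lra).
  assert (Hex : ex_series (fun n => rho ^ n * (Q n 1 - Q n a))).
  { apply (ex_series_le (K:=R_AbsRing) (V:=R_CompleteNormedModule)) with
      (fun n => rho ^ n * phi n 1 * (- ln a)); [|exact Hex1].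
    intros n. change (Rabs (rho ^ n * (Q n 1 - Q n a)) <= rho ^ n * phi n 1 * (- ln a)).
    specialize (Hterm n). rewrite Rabs_right; lra. }
  split; [exact Hex|]. unfold Phi. rewrite <- !Series_scal_r. split.
  - apply Series_le; [|exact Hex]. intros n. specialize (Hterm n). lra.
  - apply Series_le; [|exact Hex1]. intros n. specialize (Hterm n). lra.
Qed.

Fixpoint sum_list (u : nat -> R) (l : list nat) : R :=
  match l with nil => 0 | k :: l' => u k + sum_list u l' end.

Section SumList.
Variable u : nat -> R.
Hypothesis u_ge0 : forall k, 0 <= u k.

Lemma sum_list_ge0 l : 0 <= sum_list u l.
Proof. induction l as [|k l IH]; simpl; [lra|]. specialize (u_ge0 k); lra. Qed.

Lemma sum_list_remove_le l k : sum_list u (remove Nat.eq_dec k l) <= sum_list u l.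
Proof.
  induction l as [|j l IH]; simpl; [lra|].
  destruct (Nat.eq_dec k j); simpl; specialize (u_ge0 j); lra.
Qed.

Lemma sum_list_remove l k : In k l -> u k + sum_list u (remove Nat.eq_dec k l) <= sum_list u l.
Proof.
  induction l as [|j l IH]; simpl; [tauto|].
  intros Hin. destruct (Nat.eq_dec k j) as [<-|Hne].
  - pose proof (sum_list_remove_le l k). lra.
  - destruct Hin as [->|Hin]; [congruence|]. simpl. specialize (IH Hin). lra.
Qed.

End SumList.

Lemma sum_list_app u l1 l2 : sum_list u (l1 ++ l2) = sum_list u l1 + sum_list u l2.
Proof. induction l1 as [|k l1 IH]; simpl; [ring|]. rewrite IH. ring. Qed.

Lemma sum_list_seq u M : sum_list u (seq 0 (S M)) = sum_f_R0 u M.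
Proof.
  induction M as [|M IH]; [simpl; ring|].
  rewrite seq_S, sum_list_app, IH. simpl. ring.
Qed.

Lemma interval_length_le_cover (a b : nat -> R) : (forall k, a k <= b k) ->
  forall ks l r, l <= r ->
  (forall x, l <= x <= r -> exists k, In k ks /\ a k < x < b k) ->
  r - l <= sum_list (fun k => b k - a k) ks.
Proof.
  intros Hab ks. induction ks as [ks IH] using (induction_ltof1 _ (@length nat)).
  intros l r Hlr Hcov.
  assert (Hu : forall j, 0 <= b j - a j) by (intros j; specialize (Hab j); lra).
  destruct (Hcov l) as [k [Hk Hlk]]; [lra|].
  pose proof (sum_list_remove _ Hu ks k Hk) as Hrm.
  pose proof (sum_list_ge0 _ Hu (remove Nat.eq_dec k ks)).
  destruct (Rlt_le_dec r (b k)) as [Hlt|Hge]; [lra|].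
  (* the interval containing [l] reaches [b k]; cover the rest [b k, r] without it *)
  assert (r - b k <= sum_list (fun j => b j - a j) (remove Nat.eq_dec k ks)); [|lra].
  apply IH; [apply remove_length_lt; exact Hk|exact Hge|].
  intros x Hx. destruct (Hcov x) as [j [Hj Hxj]]; [lra|].
  exists j. split; [|lra]. apply in_in_remove; [intros ->; lra|exact Hj].
Qed.

Lemma nat_indices_bounded (l : list R) : exists M, forall k, In (INR k) l -> (k <= M)%nat.
Proof.
  induction l as [|r l [M IH]]; [exists 0%nat; simpl; tauto|].
  destruct (classic (exists k, r = INR k)) as [[k0 ->]|Hr].
  - exists (max k0 M). intros k [Hk|Hk].
    + apply INR_eq in Hk. lia.
    + specialize (IH k Hk). lia.
  - exists M. intros k [Hk|Hk]; [exfalso; apply Hr; exists k; auto|auto].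
Qed.

Lemma cover_sum_unit_interval C s : (forall x, 0 <= x <= 1 -> C x) -> cover_sum C s -> 1 <= s.
Proof.
  intros HC [a [b [Hab [Hcov Hs]]]].
  set (fam := mkfamily (fun r => exists k, r = INR k)
                (fun r y => exists k, r = INR k /\ a k < y < b k)
                (ltac:(intros r [y [k [e _]]]; exists k; exact e))).
  destruct (compact_P3 0 1 fam) as [D [HD [l Hl]]].
  - split.
    + intros x Hx. destruct (Hcov x (HC x Hx)) as [k Hk]. exists (INR k), k. auto.
    + intros r y [k [-> Hk]].
      assert (Hd : 0 < Rmin (y - a k) (b k - y)) by (apply Rmin_pos; lra).
      exists (mkposreal _ Hd). intros z Hz. unfold disc in Hz; simpl in Hz.
      exists k. split; auto. apply Rabs_def2 in Hz.
      pose proof (Rmin_l (y - a k) (b k - y)). pose proof (Rmin_r (y - a k) (b k - y)). lra.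
  - destruct (nat_indices_bounded l) as [M HM].
    assert (Hu : forall k, 0 <= b k - a k) by (intros k; specialize (Hab k); lra).
    assert (H1 : 1 - 0 <= sum_list (fun k => b k - a k) (seq 0 (S M))).
    { apply (interval_length_le_cover a b Hab); [lra|].
      intros x Hx. destruct (HD x Hx) as [r [[k [Er Hk]] HDr]].
      exists k. split; [|exact Hk]. apply in_seq.
      assert (In (INR k) l) by (rewrite <- Er; apply Hl; split; [exists k; exact Er|exact HDr]).
      specialize (HM k H). lia. }
    rewrite sum_list_seq in H1.
    pose proof (sum_incr _ M s Hs Hu). lra.
Qed.

Fixpoint total_length (l : list (R * R)) : R :=
  match l with nil => 0 | p :: l' => (snd p - fst p) + total_length l' end.

Definition finite_cover (l : list (R * R)) (A : R -> Prop) : Prop :=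
  (forall p, In p l -> fst p <= snd p) /\
  (forall x, A x -> exists p, In p l /\ fst p < x < snd p).

Lemma total_length_app l1 l2 : total_length (l1 ++ l2) = total_length l1 + total_length l2.
Proof. induction l1 as [|p l1 IH]; simpl; [ring|]. rewrite IH; ring. Qed.

Lemma finite_cover_app l1 l2 A B C : finite_cover l1 A -> finite_cover l2 B ->
  (forall x, C x -> A x \/ B x) -> finite_cover (l1 ++ l2) C.
Proof.
  intros [H1 H2] [H3 H4] HC. split.
  - intros p Hp. apply in_app_or in Hp. destruct Hp; auto.
  - intros x Hx. destruct (HC x Hx) as [Ha|Hb].
    + destruct (H2 x Ha) as [p [Hp Hp2]]. exists p. split; auto. apply in_or_app; auto.
    + destruct (H4 x Hb) as [p [Hp Hp2]]. exists p. split; auto. apply in_or_app; auto.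
Qed.

Lemma cover_sum_subset A B s : cover_sum A s -> (forall x, B x -> A x) -> cover_sum B s.
Proof. intros [a [b [H1 [H2 H3]]]] HBA. exists a, b. repeat split; auto. Qed.

Lemma cover_sum_cons A s a0 b0 : cover_sum A s -> a0 <= b0 ->
  cover_sum (fun x => A x \/ a0 < x < b0) (s + (b0 - a0)).
Proof.
  intros [a [b [H1 [H2 H3]]]] Hab.
  exists (fun n => match n with O => a0 | S k => a k end).
  exists (fun n => match n with O => b0 | S k => b k end).
  split; [|split].
  - intros [|k]; auto.
  - intros x [Hx|Hx]; [destruct (H2 x Hx) as [k Hk]; exists (S k)|exists O]; auto.
  - apply is_series_Reals, is_series_decr_1. apply is_series_Reals in H3.
    match goal with |- is_series _ ?l => replace l with s; [exact H3|] end.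
    unfold plus, opp; simpl. ring.
Qed.

Lemma cover_sum_app A s l B : cover_sum A s -> finite_cover l B ->
  cover_sum (fun x => A x \/ B x) (s + total_length l).
Proof.
  revert B. induction l as [|p l IH]; intros B HA [Hl1 Hl2].
  - simpl. rewrite Rplus_0_r. apply (cover_sum_subset A); auto.
    intros x [Hx|Hx]; auto. destruct (Hl2 x Hx) as [p [[] _]].
  - set (B' := fun x => exists q, In q l /\ fst q < x < snd q).
    assert (H' : finite_cover l B').
    { split; [intros q Hq; apply Hl1; right; auto|intros x Hx; exact Hx]. }
    pose proof (cover_sum_cons _ _ (fst p) (snd p) (IH B' HA H')
                  (Hl1 p (or_introl eq_refl))) as HC.
    replace (s + total_length (p :: l)) with (s + total_length l + (snd p - fst p))
      by (simpl; ring).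
    apply (cover_sum_subset _ _ _ HC). intros x [Hx|Hx]; [left; left; auto|].
    destruct (Hl2 x Hx) as [q [[<-|Hq] Hq2]]; [right; auto|left; right; exists q; auto].
Qed.

Lemma cover_sum_empty : cover_sum (fun _ => False) 0.
Proof.
  exists (fun _ => 0), (fun _ => 0). split; [intros; lra|]. split; [intros x []|].
  intros eps Heps. exists O. intros n _. unfold R_dist.
  replace (sum_f_R0 (fun _ : nat => 0 - 0) n) with 0; [rewrite Rminus_0_r, Rabs_R0; auto|].
  induction n as [|n IH]; simpl; [ring|]. rewrite <- IH; ring.
Qed.

Lemma cover_sum_of_finite l A : finite_cover l A -> cover_sum A (total_length l).
Proof.
  intros H. rewrite <- (Rplus_0_l (total_length l)).
  apply (cover_sum_subset _ _ _ (cover_sum_app _ _ l A cover_sum_empty H)). auto.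
Qed.

Lemma cover_sum_ge0 A s : cover_sum A s -> 0 <= s.
Proof.
  intros [a [b [H1 [_ H3]]]].
  assert (Hu : forall k, 0 <= b k - a k) by (intros k; specialize (H1 k); lra).
  pose proof (sum_incr _ 0 s H3 Hu). specialize (Hu 0%nat). simpl in *. lra.
Qed.

Lemma lebesgue_glb A : (exists s, cover_sum A s) -> is_glb (cover_sum A) (lebesgue A).
Proof.
  intros Hne. unfold lebesgue. apply epsilon_spec.
  destruct (completeness (fun y => cover_sum A (- y))) as [m [Hm1 Hm2]].
  - exists 0. intros y Hy. apply cover_sum_ge0 in Hy. lra.
  - destruct Hne as [s Hs]. exists (- s). rewrite Ropp_involutive. auto.
  - exists (- m). split.
    + intros s Hs. assert (- s <= m); [|lra]. apply Hm1. rewrite Ropp_involutive; auto.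
    + intros m' Hm'. assert (m <= - m'); [|lra].
      apply Hm2. intros y Hy. specialize (Hm' _ Hy). lra.
Qed.

Lemma lebesgue_le_finite_covers A m :
  (forall eps, 0 < eps -> exists l, finite_cover l A /\ total_length l <= m + eps) ->
  lebesgue A <= m.
Proof.
  intros H. destruct (H 1) as [l0 [Hl0 _]]; [lra|].
  destruct (lebesgue_glb A (ex_intro _ _ (cover_sum_of_finite _ _ Hl0))) as [G _].
  apply Rle_plus_epsilon. intros eps Heps. destruct (H eps Heps) as [l [Hl Hle]].
  specialize (G _ (cover_sum_of_finite _ _ Hl)). lra.
Qed.

Lemma lebesgue_ge A m : (exists s, cover_sum A s) ->
  (forall s, cover_sum A s -> m <= s) -> m <= lebesgue A.
Proof. intros Hne H. apply (lebesgue_glb A Hne); auto. Qed.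

Lemma F_unit_interval y : 0 <= y <= 1 -> 0 <= F y <= 1.
Proof.
  intros Hy. unfold F. destruct (Rle_dec y (1 / 2)).
  - split; [apply Rdiv_le_0_compat|apply (Rdiv_le_1 _ (1 - y))]; lra.
  - split; [apply Rdiv_le_0_compat|apply (Rdiv_le_1 _ y)]; lra.
Qed.

Lemma F_iter_unit_interval n x : 0 <= x <= 1 -> 0 <= F_iter n x <= 1.
Proof. intros Hx; induction n; simpl; auto. apply F_unit_interval; auto. Qed.

Lemma F_preimage_interval y c d : 0 <= y <= 1 -> 0 <= c -> c <= F y <= d ->
  c / (1 + c) <= y <= d / (1 + d) \/ 1 / (1 + d) <= y <= 1 / (1 + c).
Proof.
  intros Hy Hc HF. assert (Hd : 0 <= d) by lra.
  unfold F in HF. destruct (Rle_dec y (1 / 2)); [left|right]; split.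
  - apply Rmult_le_reg_r with (1 + c); [lra|].
    replace (c / (1 + c) * (1 + c)) with c by (field; lra).
    assert (c * (1 - y) <= y / (1 - y) * (1 - y)) by (apply Rmult_le_compat_r; lra).
    replace (y / (1 - y) * (1 - y)) with y in * by (field; lra). nra.
  - apply Rmult_le_reg_r with (1 + d); [lra|].
    replace (d / (1 + d) * (1 + d)) with d by (field; lra).
    assert (y / (1 - y) * (1 - y) <= d * (1 - y)) by (apply Rmult_le_compat_r; lra).
    replace (y / (1 - y) * (1 - y)) with y in * by (field; lra). nra.
  - apply Rmult_le_reg_r with (1 + d); [lra|].
    replace (1 / (1 + d) * (1 + d)) with 1 by (field; lra).
    assert ((1 - y) / y * y <= d * y) by (apply Rmult_le_compat_r; lra).
    replace ((1 - y) / y * y) with (1 - y) in * by (field; lra). nra.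
  - apply Rmult_le_reg_r with (1 + c); [lra|].
    replace (1 / (1 + c) * (1 + c)) with 1 by (field; lra).
    assert (c * y <= (1 - y) / y * y) by (apply Rmult_le_compat_r; lra).
    replace ((1 - y) / y * y) with (1 - y) in * by (field; lra). nra.
Qed.

Lemma preimage_iter_S n c d x : 0 <= c -> preimage_iter (S n) c d x ->
  preimage_iter n (c / (1 + c)) (d / (1 + d)) x \/
  preimage_iter n (1 / (1 + d)) (1 / (1 + c)) x.
Proof.
  intros Hc [Hx HF].
  destruct (F_preimage_interval _ c d (F_iter_unit_interval n x Hx) Hc HF) as [H|H];
    [left|right]; split; auto.
Qed.

Lemma branch0_interval c d : 0 <= c <= d -> 0 <= c / (1 + c) <= d / (1 + d) /\ d / (1 + d) <= 1.
Proof.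
  intros H. split; [split|].
  - apply Rdiv_le_0_compat; lra.
  - assert (0 <= d / (1 + d) - c / (1 + c)); [|lra].
    replace (d / (1 + d) - c / (1 + c)) with ((d - c) / ((1 + c) * (1 + d))) by (field; lra).
    apply Rdiv_le_0_compat; nra.
  - apply (Rdiv_le_1 _ (1 + d)); lra.
Qed.

Lemma branch1_interval c d : 0 <= c <= d -> 0 <= 1 / (1 + d) <= 1 / (1 + c) /\ 1 / (1 + c) <= 1.
Proof.
  intros H. split; [split|].
  - apply Rdiv_le_0_compat; lra.
  - apply Rmult_le_compat_l; [lra|]. apply Rinv_le_contravar; lra.
  - apply (Rdiv_le_1 _ (1 + c)); lra.
Qed.

Lemma preimage_iter_finite_cover n c d eps : 0 <= c <= d -> d <= 1 -> 0 < eps ->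
  exists l, finite_cover l (preimage_iter n c d) /\ total_length l <= Q n d - Q n c + eps.
Proof.
  revert c d eps; induction n as [|n IH]; intros c d eps Hcd Hd1 Heps.
  - exists ((c - eps / 2, d + eps / 2) :: nil). split; [split|simpl; lra].
    + intros p [<-|[]]. simpl. lra.
    + intros x [_ Hx]. exists (c - eps / 2, d + eps / 2). simpl in *. split; [auto|lra].
  - destruct (branch0_interval c d Hcd) as [P0 P0'].
    destruct (branch1_interval c d Hcd) as [P1 P1'].
    destruct (IH _ _ (eps / 2) P0 P0') as [l1 [Hl1 Hlen1]]; [lra|].
    destruct (IH _ _ (eps / 2) P1 P1') as [l2 [Hl2 Hlen2]]; [lra|].
    exists (l1 ++ l2). split.
    + apply (finite_cover_app _ _ _ _ _ Hl1 Hl2). intros x Hx. apply preimage_iter_S; [lra|auto].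
    + rewrite total_length_app. simpl. lra.
Qed.

(* Lower bound: a cover of [F^-n [a,b]], completed by nearly optimal finite covers of
   [F^-n [0,a)] and [F^-n (b,1]], covers [0,1], so Heine-Borel and [Q_total] apply. *)
Lemma lebesgue_preimage_iter n a b : 0 <= a <= b -> b <= 1 ->
  lebesgue (preimage_iter n a b) = Q n b - Q n a.
Proof.
  intros Hab Hb1. apply Rle_antisym.
  - apply lebesgue_le_finite_covers. intros eps Heps. apply preimage_iter_finite_cover; auto.
  - destruct (preimage_iter_finite_cover n a b 1 Hab Hb1) as [l0 [Hl0 _]]; [lra|].
    apply lebesgue_ge; [exists (total_length l0); apply cover_sum_of_finite; auto|].
    intros s Hs. apply Rle_plus_epsilon. intros eps Heps.
    destruct (preimage_iter_finite_cover n 0 a (eps / 2)) as [l1 [Hl1 Hlen1]]; [lra..|].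
    destruct (preimage_iter_finite_cover n b 1 (eps / 2)) as [l2 [Hl2 Hlen2]]; [lra..|].
    pose proof (cover_sum_app _ _ _ _ (cover_sum_app _ _ _ _ Hs Hl1) Hl2) as HC.
    assert (1 <= s + total_length l1 + total_length l2); [|pose proof (Q_total n); lra].
    refine (cover_sum_unit_interval _ _ _ HC).
    intros x Hx. pose proof (F_iter_unit_interval n x Hx) as Hy.
    destruct (Rlt_le_dec (F_iter n x) a); [left; right; split; auto; lra|].
    destruct (Rle_lt_dec (F_iter n x) b); [left; left; split; auto|right; split; auto; lra].
Qed.

Lemma exp_opp_nat_div n sigma : 0 < sigma -> exp (- INR n / sigma) = exp (- 1 / sigma) ^ n.
Proof.
  intros Hs. induction n as [|n IH].
  - simpl. replace (- 0 / sigma) with 0 by (field; lra). apply exp_0.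
  - rewrite S_INR, <- tech_pow_Rmult, <- IH, <- exp_plus. f_equal. field. lra.
Qed.

Theorem lemma2 (N : nat) (HN : (2 <= N)%nat) (sigma : R) (Hsigma : 0 < sigma)
  (x : R) (Hx : / INR N <= x <= 1) :
  exists L S : R,
    infinite_sum (fun n => exp (- INR n / sigma) * Fhat_iter n phi0 x) L /\
    infinite_sum (fun n => exp (- INR n / sigma) *
                   lebesgue (preimage_iter n (/ INR N) 1)) S /\
    Rabs (L - S / ln (INR N)) <= INR N * (INR N - 1) / 2.
Proof.
  set (rho := exp (- 1 / sigma)).
  assert (Hrho : 0 < rho < 1).
  { split; [apply exp_pos|]. rewrite <- exp_0. apply exp_increasing.
    assert (0 < 1 / sigma) by (apply Rdiv_lt_0_compat; lra). lra. }
  assert (HN2 : 2 <= INR N) by (apply (le_INR 2); auto).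
  assert (Ha : 0 < / INR N <= 1).
  { split; [apply Rinv_0_lt_compat; lra|].
    rewrite <- Rinv_1. apply Rinv_le_contravar; lra. }
  assert (HlnN : 0 < ln (INR N)) by (rewrite <- ln_1; apply ln_increasing; lra).
  destruct (Q_series_bounds rho (/ INR N) Hrho Ha) as [Hex [HS1 HS2]].
  rewrite ln_Rinv in HS1, HS2 by lra. rewrite Ropp_involutive in HS1, HS2.
  exists (Phi rho x), (Series (fun n => rho ^ n * (Q n 1 - Q n (/ INR N)))).
  split; [|split].
  - apply is_series_Reals, is_series_ext with (fun n => rho ^ n * phi n x).
    + intros n. unfold rho. rewrite exp_opp_nat_div; auto.
    + apply Series_correct, ex_series_Phi; lra.
  - apply is_series_Reals, is_series_ext with (fun n => rho ^ n * (Q n 1 - Q n (/ INR N))).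
    + intros n. unfold rho. rewrite exp_opp_nat_div, lebesgue_preimage_iter; lra.
    + apply Series_correct; exact Hex.
  - pose proof (Phi_mono rho Hrho (/ INR N) x ltac:(lra) ltac:(lra) ltac:(lra)).
    pose proof (Phi_mono rho Hrho x 1 ltac:(lra) ltac:(lra) ltac:(lra)).
    pose proof (Phi_oscillation rho Hrho N HN).
    apply Rmult_le_compat_r with (r := / ln (INR N)) in HS1, HS2;
      [|left; apply Rinv_0_lt_compat; lra..].
    rewrite Rmult_assoc, Rinv_r, Rmult_1_r in HS1, HS2 by lra.
    apply Rabs_le. unfold Rdiv. lra.
Qed.
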